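(* Let $n\geq 3$, $p,q>0$ with $pq>1$, $\alpha\in(0,n)$ and $\sigma_1,\sigma_2\in[0,\alpha)$, and consider the system $$u(x)=\int_{\mathbb{R}^n}\frac{v(y)^q}{|x-y|^{n-\alpha}|y|^{\sigma_1}}\,dy,\qquad v(x)=\int_{\mathbb{R}^n}\frac{u(y)^p}{|x-y|^{n-\alpha}|y|^{\sigma_2}}\,dy,\qquad x\in\mathbb{R}^n.$$ (i) If $u,v$ are bounded and decaying positive solutions of this system, then there exists a constant $C>0$ such that, as $|x|\to\infty$, $u(x)\leq C|x|^{-q_0}$ and $v(x)\leq C|x|^{-p_0}$. (ii) Suppose $q\geq p$ and $\sigma_1\geq\sigma_2$, and let $u,v$ be positive solutions of the system. Then there exists a constant $c>0$ such that, as $|x|\to\infty$, $$u(x)\geq \frac{c}{|x|^{n-\alpha}}\quad\text{and}\quad v(x)\geq \frac{c}{|x|^{\min\{n-\alpha,\ p(n-\alpha)-(\alpha-\sigma_2)\}}}.$$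
   Context: A positive solution is a pair of positive functions $u,v$ on $\mathbb{R}^n$ satisfying both equations. Define $$p_0=\frac{\alpha(1+p)-(\sigma_2+\sigma_1p)}{pq-1},\qquad q_0=\frac{\alpha(1+q)-(\sigma_1+\sigma_2q)}{pq-1}.$$ The notation $f(x)\simeq g(x)$ means that there exist constants $c,C>0$ with $cg(x)\leq f(x)\leq Cg(x)$ as $|x|\to\infty$. A positive solution $u,v$ is called decaying if $u(x)\simeq|x|^{-\theta_1}$ and $v(x)\simeq|x|^{-\theta_2}$ for some $\theta_1,\theta_2>0$. *)

From HB Require Import structures.
From mathcomp Require Import all_boot all_order all_algebra.
From mathcomp Require Import all_classical all_reals all_analysis.
Set Implicit Arguments. Unset Strict Implicit. Unset Printing Implicit Defensive.
Import Order.TTheory GRing.Theory Num.Theory.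
Import numFieldNormedType.Exports.
Local Open Scope classical_set_scope.
Local Open Scope ring_scope.

Definition enorm (R : realType) (n : nat) (x : 'rV[R]_n) : R :=
  Num.sqrt (\sum_(i < n) x ord0 i ^+ 2).

Definition setc (R : realType) (n : nat) (x : 'rV[R]_n) (k : nat) (t : R)
  : 'rV[R]_n := \row_(j < n) (if (j : nat) == k then t else x ord0 j).

Fixpoint iint (R : realType) (n : nat) (k : nat) (f : 'rV[R]_n -> \bar R)
  (x : 'rV[R]_n) : \bar R :=
  match k with
  | O => f x
  | S k' => (\int[@lebesgue_measure R]_(t in setT) iint k' f (setc x k' t))%E
  end.

(* Lebesgue integral over R^n of a nonnegative (Borel measurable) function,
   computed as the iterated integral (Tonelli). *)
Definition lebint (R : realType) (n : nat) (f : 'rV[R]_n -> \bar R) : \bar R :=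
  iint n f 0.

Definition borel_fun (R : realType) (n : nat) (f : 'rV[R]_n -> R) : Prop :=
  forall B : set R, measurable B ->
    <<s [set U : set 'rV[R]_n | open U] >> (f @^-1` B).

Definition kern (R : realType) (n : nat) (alpha sigma r : R)
  (w : 'rV[R]_n -> R) (x y : 'rV[R]_n) : R :=
  powR (w y) r / (powR (enorm (x - y)) (n%:R - alpha) * powR (enorm y) sigma).

Definition pos_solution (R : realType) (n : nat) (p q alpha s1 s2 : R)
  (u v : 'rV[R]_n -> R) : Prop :=
  (forall x, 0 < u x) /\ (forall x, 0 < v x) /\ borel_fun u /\ borel_fun v /\
  (forall x, (u x)%:E = lebint (fun y => (kern alpha s1 q v x y)%:E)) /\
  (forall x, (v x)%:E = lebint (fun y => (kern alpha s2 p u x y)%:E)).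

Definition asymp_eq (R : realType) (n : nat) (f g : 'rV[R]_n -> R) : Prop :=
  exists c C r0 : R, 0 < c /\ 0 < C /\
    forall x, r0 < enorm x -> c * g x <= f x /\ f x <= C * g x.

Definition decaying (R : realType) (n : nat) (u v : 'rV[R]_n -> R) : Prop :=
  exists th1 th2 : R, 0 < th1 /\ 0 < th2 /\
    asymp_eq u (fun x => powR (enorm x) (- th1)) /\
    asymp_eq v (fun x => powR (enorm x) (- th2)).

Definition p0 (R : realType) (p q alpha s1 s2 : R) : R :=
  (alpha * (1 + p) - (s2 + s1 * p)) / (p * q - 1).
Definition q0 (R : realType) (p q alpha s1 s2 : R) : R :=
  (alpha * (1 + q) - (s1 + s2 * q)) / (p * q - 1).

From HB Require Import structures.
From mathcomp Require Import all_boot all_order all_algebra.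
From mathcomp Require Import all_classical all_reals all_analysis.
From mathcomp Require Import measurable_realfun.
From mathcomp Require Import ring lra.
Set Implicit Arguments. Unset Strict Implicit. Unset Printing Implicit Defensive.
Import Order.TTheory GRing.Theory Num.Theory.
Import numFieldNormedType.Exports.
Local Open Scope classical_set_scope.
Local Open Scope ring_scope.

(* Both parts rest on two lower bounds, for large |x|, for the potential
     P_w(x) = \int w(y)^r |x - y|^(alpha - n) |y|^(-sigma) dy.
   On a box of side ~|x| next to x we have |x - y| <= |x| and |y| ~ |x|, so
   w(y) >= c |y|^(-theta) at infinity yields P_w(x) >= K |x|^(alpha - r theta - sigma).
   On a fixed box near the origin w^r has positive mass and |x - y| ~ |x|, so
   P_w(x) >= c |x|^(alpha - n) for every positive w.
   (i) Since u = P_v and v = P_u decay like |x|^(-theta_1) and |x|^(-theta_2), the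
   first bound forces alpha - q theta_2 - sigma_1 <= -theta_1 and
   alpha - p theta_1 - sigma_2 <= -theta_2; as pq > 1 these solve to theta_1 >= q_0
   and theta_2 >= p_0.
   (ii) The second bound gives u, v >= c |x|^(alpha - n), and feeding
   u >= c |x|^(alpha - n) into the first bound gives
   v >= K |x|^(alpha - p (n - alpha) - sigma_2). *)

Section nonneg_integral.
Local Open Scope ereal_scope.

(* Unlike [ge0_le_integral], no measurability is required: the integral of a
   nonnegative function is a supremum over its simple minorants. *)
Lemma ge0_le_integral_setT d (T : measurableType d) (R : realType)
    (mu : {measure set T -> \bar R}) (f g : T -> \bar R) :
  (forall t, 0 <= f t) -> (forall t, f t <= g t) ->
  \int[mu]_(t in setT) f t <= \int[mu]_(t in setT) g t.
Proof.
move=> f0 fg; rewrite /integral !patch_setT.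
have fN : f^\- = cst 0.
  by apply/funext => t; apply: (ge0_funenegE (D := setT)); rewrite ?in_setT.
have gN : g^\- = cst 0.
  apply/funext => t; apply: (ge0_funenegE (D := setT)); rewrite ?in_setT //.
  by move=> x _; exact: le_trans (f0 x) (fg x).
rewrite fN gN leeB //; apply: le_ereal_sup => _ [h /= hf <-]; exists h => //= t.
apply: le_trans (hf t) _.
by apply: (funepos_le (D := setT)) => [x _|]; rewrite ?in_setT.
Qed.

Lemma integral_cst_indic_itv (R : realType) (c lo hi : R) : (0 <= c)%R -> (lo <= hi)%R ->
  \int[@lebesgue_measure R]_(t in setT) (c * (lo <= t <= hi)%R%:R)%:E =
  (c * (hi - lo))%:E.
Proof.
move=> c0 lohi.
transitivity (\int[@lebesgue_measure R]_(t in setT) (c%:E * (\1_[set` `[lo, hi]] t)%:E)).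
  apply: eq_integral => t _; rewrite indicE -EFinM.
  by rewrite mem_setE in_itv.
rewrite ge0_integralZl_EFin //; last exact/measurable_EFinP/measurable_indic.
rewrite integral_indic // setIT.
have := lebesgue_measure_itv `[lo, hi]; rewrite /= => ->; rewrite lte_fin.
have [lthi|] := ltP lo hi; first by rewrite -EFinD -EFinM.
by move=> hilo; rewrite (_ : hi = lo) ?subrr ?mulr0 ?mule0 //; apply/le_anti/andP.
Qed.

Lemma integral_gt0_itv (R : realType) (h : R -> \bar R) (a b : R) : (a < b)%R ->
  measurable_fun setT h -> (forall t, 0 <= h t) ->
  (forall t, (a <= t <= b)%R -> 0 < h t) ->
  0 < \int[@lebesgue_measure R]_(t in setT) h t.
Proof.
move=> ab mh h0 hpos; rewrite lt_neqAle integral_ge0 ?andbT //; apply/eqP => h_int0.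
have mab : measurable ([set` `[a, b]] : set R) by [].
have habs0 : \int[@lebesgue_measure R]_(t in [set` `[a, b]]) `|h t| = 0.
  apply/le_anti; rewrite integral_ge0 ?andbT // h_int0 integral_mkcond.
  apply: ge0_le_integral_setT => t; rewrite /patch; case: ifP => // _.
  by rewrite gee0_abs.
have mhab : measurable_fun [set` `[a, b]] h by exact: measurable_funS mh.
have [N [mN N0 abN]] := (ae_eq_integral_abs (@lebesgue_measure R) mab mhab).1 habs0.
have : lebesgue_measure [set` `[a, b]] <= lebesgue_measure N.
  apply: le_measure; rewrite ?inE // => t abt; apply: abN => /(_ abt) ht0.
  by move: abt (hpos t); rewrite /= in_itv => /[swap] /[apply]; rewrite ht0 ltxx.
rewrite N0 lebesgue_measure_itv /= lte_fin ab -EFinD lee_fin subr_le0.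
by rewrite leNgt ab.
Qed.

End nonneg_integral.

Section iterated_integral.
Context {R : realType} {n : nat}.
Local Open Scope ereal_scope.
Implicit Types (f g : 'rV[R]_n -> \bar R) (lo hi : 'I_n -> R).

Lemma iint_ge0 k f : (forall y, 0 <= f y) -> forall x, 0 <= iint k f x.
Proof.
move=> f0; elim: k => [|k IH] x /=; first exact: f0.
by apply: integral_ge0 => t _; exact: IH.
Qed.

Lemma le_iint k f g : (forall y, 0 <= f y) -> (forall y, f y <= g y) ->
  forall x, iint k f x <= iint k g x.
Proof.
move=> f0 fg; elim: k => [|k IH] x /=; first exact: fg.
by apply: ge0_le_integral_setT => t; [exact: iint_ge0 | exact: IH].
Qed.

(* Only the coordinates [k <= i] are constrained: the first [k] coordinates are
   those already integrated out by [iint k]. *)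
Definition in_box lo hi (k : nat) (y : 'rV[R]_n) : bool :=
  [forall i : 'I_n, (k <= i)%N ==> (lo i <= y ord0 i <= hi i)%R].

Lemma in_box_setc lo hi k (kn : (k < n)%N) x t :
  in_box lo hi k (setc x k t) =
  (lo (Ordinal kn) <= t <= hi (Ordinal kn))%R && in_box lo hi k.+1 x.
Proof.
have setcE (i : 'I_n) : setc x k t ord0 i = if (i : nat) == k then t else x ord0 i.
  by rewrite mxE.
apply/forallP/andP => [xb|[tk /forallP xb] i].
  split; first by have := xb (Ordinal kn); rewrite setcE /= leqnn eqxx.
  apply/forallP => i; apply/implyP => ki.
  by have := xb i; rewrite setcE (ltnW ki) gtn_eqF.
apply/implyP => ki; rewrite setcE; case: eqP => [ik|ik].
  by rewrite (_ : i = Ordinal kn) //; exact: val_inj.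
by have /implyP := xb i; apply; rewrite ltn_neqAle ki andbT; apply/eqP => /esym.
Qed.

Lemma iint_box_indic (M : R) lo hi : (0 <= M)%R -> (forall i, lo i <= hi i)%R ->
  forall k, (k <= n)%N -> forall x,
  iint k (fun y => (M * (in_box lo hi 0 y)%:R)%:E) x =
  (M * (\prod_(i < n | (i < k)%N) (hi i - lo i)) * (in_box lo hi k x)%:R)%:E.
Proof.
move=> M0 lohi; elim=> [|k IH] kn x /=; first by rewrite big_pred0 ?mulr1.
transitivity (\int[@lebesgue_measure R]_(t in setT)
  ((M * (\prod_(i < n | (i < k)%N) (hi i - lo i)) * (in_box lo hi k.+1 x)%:R) *
    (lo (Ordinal kn) <= t <= hi (Ordinal kn))%R%:R)%:E).
  apply: eq_integral => t _; rewrite IH ?(ltnW kn) // in_box_setc.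
  by case: (in_box _ _ _ x); case: (_ <= t <= _)%R; rewrite ?mulr1 ?mulr0.
rewrite integral_cst_indic_itv //; last first.
  by rewrite !mulr_ge0 // prodr_ge0 // => i _; rewrite subr_ge0.
rewrite [in RHS](bigD1 (Ordinal kn)) //=.
rewrite [in RHS](eq_bigl (fun i : 'I_n => (i < k)%N)); last first.
  by move=> i /=; rewrite ltnS ltn_neqAle andbC -val_eqE.
congr (_%:E); ring.
Qed.

Lemma lebint_ge_box (f : 'rV[R]_n -> R) (M : R) lo hi : (0 <= M)%R ->
  (forall i, lo i <= hi i)%R -> (forall y, 0 <= f y)%R ->
  (forall y, in_box lo hi 0 y -> M <= f y)%R ->
  (M * \prod_(i < n) (hi i - lo i))%:E <= lebint (fun y => (f y)%:E).
Proof.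
move=> M0 lohi f0 fM.
have -> : (M * \prod_(i < n) (hi i - lo i))%:E =
    iint n (fun y => (M * (in_box lo hi 0 y)%:R)%:E) 0.
  rewrite iint_box_indic // (_ : in_box lo hi n 0 = true); last first.
    by apply/forallP => i; rewrite leqNgt ltn_ord.
  by rewrite mulr1; congr (_ * _)%:E; apply: eq_bigl => i; rewrite ltn_ord.
apply: le_iint => [y|y]; first by rewrite lee_fin mulr_ge0.
by rewrite lee_fin; case: (boolP (in_box lo hi 0 y)) => [/fM|_]; rewrite ?mulr1 ?mulr0.
Qed.

End iterated_integral.

Section norms.
Context {R : realType} {n : nat}.
Implicit Types z : 'rV[R]_n.

Lemma coord_le_mx_norm z i : `|z ord0 i| <= `|z|.
Proof. by rewrite [`|z|]mx_normrE; apply: (le_bigmax _ _ (ord0, i)). Qed.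

Lemma mx_norm_le z c : 0 <= c -> (forall i, `|z ord0 i| <= c) -> `|z| <= c.
Proof.
move=> c0 zc; rewrite [`|z|]mx_normrE; apply: bigmax_le => // -[a b] _ /=.
by rewrite (ord1 a); exact: zc.
Qed.

Lemma enorm_ge0 z : 0 <= enorm z.
Proof. exact: sqrtr_ge0. Qed.

Lemma mx_norm_le_enorm z : `|z| <= enorm z.
Proof.
apply: mx_norm_le => [|i]; first exact: enorm_ge0.
rewrite /enorm -sqrtr_sqr; apply: ler_wsqrtr.
by rewrite (bigD1 i) //= lerDl sumr_ge0 // => j _; rewrite sqr_ge0.
Qed.

Lemma enorm_le_mx_norm z : enorm z <= n%:R * `|z|.
Proof.
rewrite /enorm -[leRHS]ger0_norm ?mulr_ge0 // -sqrtr_sqr; apply: ler_wsqrtr.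
apply: (@le_trans _ _ (\sum_(i < n) `|z| ^+ 2)).
  apply: ler_sum => i _; rewrite -real_normK ?num_real //.
  by rewrite lerXn2r ?nnegrE // coord_le_mx_norm.
rewrite sumr_const card_ord exprMn -[leLHS]mulr_natl.
apply: ler_wpM2r; first exact: sqr_ge0.
by rewrite -natrX ler_nat; case: (n) => // m; rewrite expnS leq_pmulr // expn_gt0.
Qed.

Lemma enorm_surj : (0 < n)%N -> forall t : R, 0 <= t -> exists x : 'rV[R]_n, enorm x = t.
Proof.
move=> n0 t t0; pose i0 : 'I_n := Ordinal n0.
exists (\row_j (if j == i0 then t else 0)).
rewrite /enorm (bigD1 i0) //= big1 ?addr0; first by rewrite mxE eqxx sqrtr_sqr ger0_norm.
by move=> j /negbTE ji; rewrite mxE ji expr0n.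
Qed.

End norms.

Section coordinate_sigma_algebra.
Context {R : realType} {n : nat}.

Definition cylinders : set (set 'rV[R]_n) :=
  [set A | exists (i : 'I_n) (B : set R), measurable B /\ A = [set y : 'rV[R]_n | B (y ord0 i)]].

(* [iint] is built from one-dimensional integrals, so it is handled on R^n
   equipped with the sigma-algebra generated by the coordinate functions. *)
Definition cylType := g_sigma_algebraType cylinders.

Lemma measurable_cylinder (i : 'I_n) (B : set R) : measurable B ->
  measurable ([set y | B (y ord0 i)] : set cylType).
Proof. by move=> mB; apply: sub_sigma_algebra; exists i, B. Qed.

Lemma measurable_setc k :
  measurable_fun (setT : set (cylType * R)) (fun z => (setc z.1 k z.2 : cylType)).
Proof.
apply: (@measurability _ _ _ cylType _ _ cylinders) => //.
move=> _ [_ [i [B [mB ->]]] <-].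
have setcE (y : 'rV[R]_n) t : setc y k t ord0 i = if (i : nat) == k then t else y ord0 i.
  by rewrite mxE.
case: (eqVneq (i : nat) k) => ik.
  rewrite (_ : _ `&` _ = setT `*` B); first exact: measurableX.
  by apply/seteqP; split => -[y t] /=; rewrite setcE ik eqxx; tauto.
rewrite (_ : _ `&` _ = [set y : cylType | B (y ord0 i)] `*` setT).
  by apply: measurableX => //; exact: measurable_cylinder.
by apply/seteqP; split => -[y t] /=; rewrite setcE (negbTE ik); tauto.
Qed.

Lemma measurable_setc1 k (x : 'rV[R]_n) :
  measurable_fun (setT : set R) (fun t => (setc x k t : cylType)).
Proof. exact: measurable_fun_pair2 (x : cylType) (measurable_setc k). Qed.

Definition rat_box (c : {ffun 'I_n -> rat * rat}) : set 'rV[R]_n :=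
  [set y | forall i, ratr (c i).1 < y ord0 i < ratr (c i).2].

Lemma measurable_rat_box c : measurable (rat_box c : set cylType).
Proof.
rewrite (_ : rat_box c = \bigcap_(i in [set: 'I_n])
    [set y | [set` `](ratr (c i).1), (ratr (c i).2)[] (y ord0 i)]).
  apply: fin_bigcap_measurable; first exact: (@finite_finset 'I_n setT).
  by move=> i _; exact: (measurable_cylinder i (measurable_itv _)).
apply/seteqP; split => y /=.
  by move=> yc i _ /=; rewrite in_itv /= yc.
by move=> yc i; have := yc i I; rewrite /= in_itv.
Qed.

Lemma rat_box_around (U : set 'rV[R]_n) y : open U -> U y ->
  exists2 c, rat_box c `<=` U & rat_box c y.
Proof.
rewrite openE => /[apply] /nbhs_ballP [e e0 yeU].
have e20 : 0 < e / 2 by rewrite divr_gt0.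
have ratP i : exists c : rat * rat, ratr c.1 < y ord0 i < ratr c.2 /\
    y ord0 i - e / 2 < ratr c.1 /\ ratr c.2 < y ord0 i + e / 2.
  have [a] : exists a, ratr a \in `](y ord0 i - e / 2), (y ord0 i)[.
    by apply: rat_in_itvoo; rewrite gtrBl.
  have [b] : exists b, ratr b \in `](y ord0 i), (y ord0 i + e / 2)[.
    by apply: rat_in_itvoo; rewrite ltrDl.
  rewrite !in_itv /= => /andP[yb be] /andP[ea ay].
  by exists (a, b) => /=; rewrite ay yb ea be.
pose c := [ffun i => proj1_sig (cid (ratP i))].
have cP i := proj2_sig (cid (ratP i)).
exists c => [z zc|i]; last by rewrite ffunE; case: (cP i).
apply: yeU; rewrite -ball_normE /=.
apply: (@le_lt_trans _ _ (e / 2)); last by rewrite ltr_pdivrMr // ltr_pMr // ltr1n.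
apply: mx_norm_le => [|i]; first exact: ltW.
have := zc i; rewrite !mxE ffunE => /andP[az zb].
by case: (cP i) => _ [ea be]; rewrite ler_norml; apply/andP; split; lra.
Qed.

(* An open set is the countable union of the rational boxes it contains. *)
Lemma open_measurable_cyl (U : set 'rV[R]_n) : open U -> measurable (U : set cylType).
Proof.
move=> oU.
pose A m : set cylType :=
  [set y | exists c, unpickle m = Some c /\ rat_box c `<=` U /\ rat_box c y].
have -> : U = \bigcup_m A m.
  apply/seteqP; split => [y Uy|y [m _ [c [_ [cU /cU]]]] //].
  have [c cU cy] := rat_box_around oU Uy.
  by exists (pickle c) => //; exists c; rewrite pickleK.
apply: bigcupT_measurable => m; case E: (unpickle m) => [c|].
  have [cU|ncU] := pselect (rat_box c `<=` U).
    rewrite (_ : A m = rat_box c); first exact: measurable_rat_box.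
    apply/seteqP; split => y; last by exists c.
    by move=> [c' []]; rewrite E => -[<-] [].
  rewrite (_ : A m = set0) //.
  by apply/seteqP; split => y // [c' []]; rewrite E => -[<-] [].
rewrite (_ : A m = set0) //.
by apply/seteqP; split => y // [c' []]; rewrite E.
Qed.

Lemma borel_fun_measurable (w : 'rV[R]_n -> R) :
  borel_fun w -> measurable_fun (setT : set cylType) w.
Proof.
move=> bw _ B mB; rewrite setTI.
apply: smallest_sub (bw B mB) => [|U]; first exact: (@sigma_algebra_measurable _ cylType).
exact: open_measurable_cyl.
Qed.

Lemma measurable_in_box (lo hi : 'I_n -> R) :
  measurable ([set y | in_box lo hi 0 y] : set cylType).
Proof.
rewrite (_ : [set y | _] = \bigcap_(i in [set: 'I_n])
    [set y : 'rV[R]_n | [set` `[(lo i), (hi i)]] (y ord0 i)]).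
  apply: fin_bigcap_measurable; first exact: (@finite_finset 'I_n setT).
  by move=> i _; exact: (measurable_cylinder i (measurable_itv _)).
apply/seteqP; split => y /=.
  by move=> /forallP yb i _ /=; rewrite in_itv /=; exact: yb.
by move=> yb; apply/forallP => i; have := yb i I; rewrite /= in_itv.
Qed.

End coordinate_sigma_algebra.

Section iterated_integral_measurable.
Context {R : realType} {n : nat}.
Local Open Scope ereal_scope.
Implicit Types f : @cylType R n -> \bar R.

Lemma measurable_iint k f : measurable_fun setT f -> (forall y, 0 <= f y) ->
  measurable_fun (setT : set (@cylType R n)) (iint k f).
Proof.
move=> mf f0; elim: k => [|k IH] //=.
exact: (@measurable_fun_fubini_tonelli_F _ _ (@cylType R n) _ R lebesgue_measure
  _ (measurableT_comp IH (measurable_setc k)) (fun z => iint_ge0 k f0 _)).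
Qed.

Lemma iintZl k f (c : R) : measurable_fun setT f -> (forall y, 0 <= f y) ->
  (0 <= c)%R -> forall x, iint k (fun y => c%:E * f y) x = c%:E * iint k f x.
Proof.
move=> mf f0 c0; elim: k => [|k IH] x //=.
under eq_integral do rewrite IH.
apply: ge0_integralZl_EFin => // [t _|]; first exact: iint_ge0.
exact: measurableT_comp (measurable_iint k mf f0) (measurable_setc1 k x).
Qed.

Lemma iint_gt0_box f (lo hi : 'I_n -> R) :
  measurable_fun setT f -> (forall y, 0 <= f y) -> (forall i, lo i < hi i)%R ->
  (forall y, in_box lo hi 0 y -> 0 < f y) ->
  forall k, (k <= n)%N -> forall x, in_box lo hi k x -> 0 < iint k f x.
Proof.
move=> mf f0 lohi fpos; elim=> [|k IH] kn x /=; first exact: fpos.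
move=> xk; apply: (@integral_gt0_itv _ _ (lo (Ordinal kn)) (hi (Ordinal kn))) => //.
- exact: measurableT_comp (measurable_iint k mf f0) (measurable_setc1 k x).
- by move=> t; exact: iint_ge0.
- by move=> t tk; apply: IH; [exact: ltnW | rewrite in_box_setc tk].
Qed.

Lemma lebint_gt0_box f (lo hi : 'I_n -> R) :
  measurable_fun setT f -> (forall y, 0 <= f y) -> (forall i, lo i < hi i)%R ->
  (forall y, in_box lo hi 0 y -> 0 < f y) -> 0 < lebint f.
Proof.
move=> mf f0 lohi fpos; apply: iint_gt0_box => //.
by apply/forallP => i; rewrite leqNgt ltn_ord.
Qed.

End iterated_integral_measurable.

Section potential.
Context {R : realType} {n : nat}.
Implicit Types (w : 'rV[R]_n -> R) (x y : 'rV[R]_n).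

Definition potential (al sg r : R) w x : \bar R :=
  lebint (fun y => (kern al sg r w x y)%:E).

Lemma kern_ge0 al sg r w x y : 0 <= kern al sg r w x y.
Proof. by rewrite /kern divr_ge0 // ?mulr_ge0 // powR_ge0. Qed.

Lemma kern_ge al sg r w x y (W D S : R) : al <= n%:R -> 0 <= sg -> 0 <= r ->
  0 <= W -> W <= w y -> 0 < enorm (x - y) <= D -> 0 < enorm y <= S ->
  powR W r / (powR D (n%:R - al) * powR S sg) <= kern al sg r w x y.
Proof.
move=> aln sg0 r0 W0 Ww /andP[d0 dD] /andP[s0 sS].
have powR_mono (e a b : R) : 0 <= e -> 0 <= a -> a <= b -> powR a e <= powR b e.
  by move=> e0 a0 ab; apply: ge0_ler_powR; rewrite ?nnegrE // (le_trans a0).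
have d_pos : 0 < D by exact: lt_le_trans dD.
have S_pos : 0 < S by exact: lt_le_trans sS.
rewrite /kern; apply: ler_pM; rewrite ?powR_ge0 ?invr_ge0 ?mulr_ge0 ?powR_ge0 ?powR_mono //.
rewrite lef_pV2 ?posrE ?mulr_gt0 ?powR_gt0 //.
by apply: ler_pM; rewrite ?powR_ge0 ?powR_mono ?enorm_ge0 ?subr_ge0.
Qed.

Definition near_infinity (P : 'rV[R]_n -> Prop) :=
  exists r0 : R, forall x, r0 < enorm x -> P x.

Lemma near_infinity_and (P Q : 'rV[R]_n -> Prop) :
  near_infinity P -> near_infinity Q -> near_infinity (fun x => P x /\ Q x).
Proof.
move=> [r1 P1] [r2 Q2]; exists (Num.max r1 r2) => x.
by rewrite gt_max => /andP[x1 x2]; split; [exact: P1 | exact: Q2].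
Qed.

Lemma near_box_enorm x y (h : R) : (0 < n)%N -> 0 < h -> 4 * n%:R * h = enorm x ->
  in_box (fun i => x ord0 i + h) (fun i => x ord0 i + 2 * h) 0 y ->
  [/\ h <= enorm (x - y), enorm (x - y) <= enorm x,
      enorm x <= 2 * n%:R * enorm y & enorm y <= 2 * n%:R * enorm x].
Proof.
move=> n0 h0 hE /forallP yb; have N1 : 1 <= n%:R :> R by rewrite ler1n.
have xy_lb : h <= `|x - y|.
  apply: le_trans (coord_le_mx_norm _ (Ordinal n0)).
  by have /andP[lo_y y_hi] := yb (Ordinal n0); rewrite !mxE ler0_norm; lra.
have xy_ub : `|x - y| <= 2 * h.
  apply: mx_norm_le => [|i]; first lra.
  by have /andP[lo_y y_hi] := yb i; rewrite !mxE ler0_norm; lra.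
have x_yxy : `|x| <= `|x - y| + `|y| by rewrite -{1}(subrK y x) ler_normD.
have y_xxy : `|y| <= `|x| + `|x - y|.
  by rewrite -{1}(_ : x - (x - y) = y) ?ler_normB // opprB addrC subrK.
have N_mono (a b : R) : a <= b -> n%:R * a <= n%:R * b by move=> ab; rewrite ler_wpM2l // ler0n.
have := mx_norm_le_enorm (x - y); have := enorm_le_mx_norm (x - y).
have := mx_norm_le_enorm x; have := enorm_le_mx_norm x.
have := mx_norm_le_enorm y; have := enorm_le_mx_norm y.
have := N_mono _ _ xy_ub; have := N_mono _ _ x_yxy; have := N_mono _ _ y_xxy.
have := N_mono _ _ (mx_norm_le_enorm y); have := N_mono _ _ (mx_norm_le_enorm x).
by move=> *; split; lra.
Qed.

End potential.

(* The lower bound for the kernel on the box next to x, times the volume of that box. *)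
Lemma near_box_scaling (R : realType) (c r th sg a N t : R) : 0 < c -> 0 < N -> 0 < t ->
  powR (c * powR (2 * N * t) (- th)) r / (powR t a * powR (2 * N * t) sg) *
    powR (t / (4 * N)) N =
  expR (r * ln c - (r * th + sg) * ln (2 * N) - N * ln (4 * N)) *
    powR t (N - a - r * th - sg).
Proof.
move=> c0 N0 t0; set W := c * _; set M := _ / _; set h := t / _; set K := expR _.
have N2t0 : 0 < 2 * N * t by rewrite !mulr_gt0.
have h0 : 0 < h by rewrite divr_gt0 ?mulr_gt0.
have W_gt0 : 0 < W by rewrite mulr_gt0 ?powR_gt0.
have M_gt0 : 0 < M by rewrite divr_gt0 ?mulr_gt0 ?powR_gt0.
have ln2Nt : ln (2 * N * t) = ln (2 * N) + ln t by rewrite lnM ?posrE ?mulr_gt0.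
have lnh : ln h = ln t - ln (4 * N) by rewrite ln_div ?posrE ?mulr_gt0.
have lnW : ln W = ln c - th * ln (2 * N * t) by rewrite /W lnM ?posrE ?powR_gt0 // ln_powR mulNr.
have lnM_ : ln M = r * ln W - (a * ln t + sg * ln (2 * N * t)).
  by rewrite /M ln_div ?posrE ?mulr_gt0 ?powR_gt0 // lnM ?posrE ?powR_gt0 // !ln_powR.
have lhs_gt0 : 0 < M * powR h N by rewrite mulr_gt0 ?powR_gt0.
have rhs_gt0 : 0 < K * powR t (N - a - r * th - sg) by rewrite mulr_gt0 ?expR_gt0 ?powR_gt0.
apply: ln_inj; rewrite ?posrE //.
rewrite [ln (M * _)]lnM ?posrE ?powR_gt0 // lnM ?posrE ?expR_gt0 ?powR_gt0 //.
rewrite !ln_powR expRK lnM_ lnW ln2Nt lnh.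
ring.
Qed.

Section potential_bounds.
Context {R : realType} {n : nat}.
Implicit Types (w : 'rV[R]_n -> R) (x y : 'rV[R]_n).

Lemma potential_ge_near w (al sg r th c : R) : (0 < n)%N -> al <= n%:R ->
  0 <= sg -> 0 <= r -> 0 <= th -> 0 < c ->
  near_infinity (fun y => c * powR (enorm y) (- th) <= w y) ->
  exists2 K, 0 < K & near_infinity (fun x =>
    ((K * powR (enorm x) (al - r * th - sg))%:E <= potential al sg r w x)%E).
Proof.
move=> n0 aln sg0 r0 th0 c0 [r1 w_lb].
set N : R := n%:R; have N1 : 1 <= N by rewrite ler1n.
pose K := expR (r * ln c - (r * th + sg) * ln (2 * N) - N * ln (4 * N)).
exists K; first exact: expR_gt0.
exists (2 * N * Num.max r1 1) => x; set t := enorm x => t_large.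
have t0 : 0 < t by apply: lt_trans t_large; rewrite !mulr_gt0 ?lt_max ?ltr01 ?orbT //; lra.
pose h := t / (4 * N); have h0 : 0 < h by rewrite divr_gt0 //; lra.
have hE : 4 * N * h = t by rewrite /h mulrC divfK //; lra.
pose lo i := x ord0 i + h; pose hi i := x ord0 i + 2 * h.
pose W := c * powR (2 * N * t) (- th).
have W0 : 0 <= W by rewrite mulr_ge0 ?powR_ge0 // ltW.
pose M := powR W r / (powR t (N - al) * powR (2 * N * t) sg).
have kern_M y : in_box lo hi 0 y -> M <= kern al sg r w x y.
  move=> /(near_box_enorm n0 h0 hE) [hd dt ts st].
  have s_large : Num.max r1 1 < enorm y.
    by rewrite -(ltr_pM2l (_ : 0 < 2 * N)) ?(lt_le_trans t_large) //; lra.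
  have s0 : 0 < enorm y by apply: le_lt_trans s_large; rewrite le_max ler01 orbT.
  apply: kern_ge; rewrite ?W0 ?st ?dt ?s0 ?(lt_le_trans h0 hd) //.
  apply: le_trans (w_lb y _); last by apply: le_lt_trans s_large; rewrite le_max lexx.
  rewrite ler_pM2l // !powRN lef_pV2 ?posrE ?powR_gt0 //; last by rewrite !mulr_gt0 //; lra.
  apply: ge0_ler_powR => //; rewrite ?nnegrE ?enorm_ge0 //.
  by rewrite !mulr_ge0 //; lra.
have M0 : 0 <= M by rewrite divr_ge0 ?powR_ge0 ?mulr_ge0 ?powR_ge0.
have lohi i : lo i <= hi i by rewrite /lo /hi; lra.
apply: le_trans (lebint_ge_box M0 lohi (kern_ge0 al sg r w x) kern_M).
rewrite (eq_bigr (fun=> h)); last by move=> i _; rewrite /hi /lo; ring.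
rewrite prodr_const card_ord -powR_mulrn ?(ltW h0) // -/N lee_fin /M /W /h.
rewrite near_box_scaling //; last by lra.
by rewrite (_ : N - (N - al) - r * th - sg = al - r * th - sg) //; ring.
Qed.

Lemma origin_box_enorm x y : (0 < n)%N -> 1 < enorm x ->
  in_box (fun=> (2 * n%:R)^-1) (fun=> n%:R^-1) 0 y ->
  0 < enorm y <= 1 /\ 0 < enorm (x - y) <= 2 * n%:R * enorm x.
Proof.
move=> n0 x1 /forallP yb; set N : R := n%:R; have N1 : 1 <= N by rewrite ler1n.
have Ninv : N * N^-1 = 1 by rewrite divff //; lra.
have b_pos : 0 < (2 * N)^-1 by rewrite invr_gt0; lra.
have b2 : 2 * (2 * N)^-1 = N^-1 by rewrite invfM mulrA divff ?mul1r.
have y_lb : (2 * N)^-1 <= `|y|.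
  apply: le_trans (coord_le_mx_norm _ (Ordinal n0)).
  by have /andP[lo_y y_hi] := yb (Ordinal n0); rewrite ger0_norm //; lra.
have y_ub : `|y| <= N^-1.
  apply: mx_norm_le => [|i]; first by rewrite invr_ge0; lra.
  by have /andP[lo_y y_hi] := yb i; rewrite ger0_norm //; lra.
have x_xyy : `|x| <= `|x - y| + `|y| by rewrite -{1}(subrK y x) ler_normD.
have xy_xy : `|x - y| <= `|x| + `|y| by exact: ler_normB.
have N_mono (a b : R) : a <= b -> N * a <= N * b by move=> ab; rewrite ler_wpM2l //; lra.
have := mx_norm_le_enorm (x - y); have := enorm_le_mx_norm (x - y).
have := mx_norm_le_enorm x; have := enorm_le_mx_norm x.
have := mx_norm_le_enorm y; have := enorm_le_mx_norm y.
have := N_mono _ _ y_ub; have := N_mono _ _ x_xyy; have := N_mono _ _ xy_xy.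
by move=> *; split; apply/andP; split; nra.
Qed.

Lemma potential_ge_far w (al sg r : R) : (0 < n)%N -> al <= n%:R -> 0 <= sg ->
  0 <= r -> (forall y, 0 < w y) -> borel_fun w ->
  exists2 c, 0 < c & near_infinity (fun x =>
    ((c * powR (enorm x) (- (n%:R - al)))%:E <= potential al sg r w x)%E).
Proof.
move=> n0 aln sg0 r0 w_pos w_borel.
set N : R := n%:R; have N1 : 1 <= N by rewrite ler1n.
pose lo := fun _ : 'I_n => (2 * N)^-1; pose hi := fun _ : 'I_n => N^-1.
have lohi i : lo i < hi i by rewrite ltf_pV2 ?posrE; lra.
pose G y := powR (w y) r * (in_box lo hi 0 y)%:R.
have G0 y : 0 <= G y by rewrite mulr_ge0 ?powR_ge0.
have mG : measurable_fun (setT : set cylType) (fun y => (G y)%:E).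
  apply/measurable_EFinP/measurable_funM.
    exact: measurableT_comp (measurable_powR r) (borel_fun_measurable w_borel).
  rewrite (_ : (fun y => _) = \1_[set y | in_box lo hi 0 y]).
    by apply: measurable_indic; exact: measurable_in_box.
  by apply/funext => y; rewrite indicE mem_setE.
have G_int_gt0 : (0 < lebint (fun y => (G y)%:E))%E.
  apply: lebint_gt0_box mG _ lohi _ => [y|y yb]; first by rewrite lee_fin.
  by rewrite /G yb mulr1 lte_fin powR_gt0.
have [mass [mass_gt0 mass_le]] : exists c, 0 < c /\ (c%:E <= lebint (fun y => (G y)%:E))%E.
  move: G_int_gt0; case: (lebint _) => [g g0||] //; last by exists 1; rewrite leey.
  by exists g; rewrite lee_fin.
exists (mass * powR (2 * N) (- (N - al))); first by rewrite mulr_gt0 ?powR_gt0 //; lra.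
exists 1 => x x1; set t := enorm x in x1 *.
pose k := powR (2 * N * t) (- (N - al)).
have kG_kern y : (k%:E * (G y)%:E <= (kern al sg r w x y)%:E)%E.
  rewrite -EFinM lee_fin /G; case: (boolP (in_box lo hi 0 y)) => yb; last first.
    by rewrite mulr0 mulr0 kern_ge0.
  have [s_bd d_bd] := origin_box_enorm n0 x1 yb.
  have := kern_ge aln sg0 r0 (ltW (w_pos y)) (lexx _) d_bd s_bd.
  by rewrite powR1 /= !mulr1 /k powRN mulrC.
have kG0 y : (0 <= k%:E * (G y)%:E)%E by rewrite mule_ge0 ?lee_fin ?powR_ge0.
rewrite /potential /lebint; apply: le_trans (le_iint n kG0 kG_kern 0).
rewrite (iintZl _ mG) ?powR_ge0 //.
apply: le_trans (lee_wpmul2l _ mass_le); last by rewrite lee_fin powR_ge0.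
rewrite -EFinM lee_fin /k [powR (2 * N * t) _]powRM; [|lra|lra].
by rewrite -mulrA mulrC.
Qed.

End potential_bounds.

Lemma powR_expR (R : realType) (s e : R) : 0 < s -> powR s e = expR (e * ln s).
Proof. by move=> s0; rewrite /powR gt_eqF. Qed.

Lemma exponent_le_of_powR_le (R : realType) (K C e1 e2 r0 : R) : 0 < K -> 0 < C ->
  (forall t, r0 < t -> K * powR t e1 <= C * powR t e2) -> e1 <= e2.
Proof.
move=> K0 C0 KC; rewrite leNgt; apply/negP => e21.
pose L := Num.max r0 ((`|ln C - ln K| + 1) / (e1 - e2)).
have r0_L : r0 <= L by rewrite le_max lexx.
have L_large : (`|ln C - ln K| + 1) / (e1 - e2) <= L by rewrite le_max lexx orbT.
have t_large : r0 < expR L by apply: lt_le_trans (expR_ge1Dx L); lra.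
have := KC _ t_large; rewrite !powR_expR ?expR_gt0 // expRK.
rewrite -ler_ln ?posrE ?mulr_gt0 ?expR_gt0 // !lnM ?posrE ?expR_gt0 // !expRK => ineq.
have : `|ln C - ln K| + 1 <= L * (e1 - e2) by rewrite -ler_pdivrMr // subr_gt0.
by have := ler_norm (ln C - ln K); nra.
Qed.

Section exponent_comparison.
Context {R : realType} {n : nat}.

Lemma near_infinity_exponent_le (f : 'rV[R]_n -> R) (K C e1 e2 : R) : (0 < n)%N ->
  0 < K -> 0 < C ->
  near_infinity (fun x => K * powR (enorm x) e1 <= f x) ->
  near_infinity (fun x => f x <= C * powR (enorm x) e2) -> e1 <= e2.
Proof.
move=> n0 K0 C0 f_lb f_ub; have [r0 Kf_fC] := near_infinity_and f_lb f_ub.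
apply: (@exponent_le_of_powR_le _ K C e1 e2 (Num.max r0 0)) => // t.
rewrite gt_max => /andP[r0t t0]; have [x xt] := enorm_surj n0 (ltW t0).
rewrite -xt in r0t *.
by have [lb ub] := Kf_fC x r0t; exact: le_trans lb ub.
Qed.

End exponent_comparison.

Lemma decay_exponents_ge (R : realType) (p q al s1 s2 th1 th2 : R) :
  0 < p -> 0 < q -> 1 < p * q ->
  al - q * th2 - s1 <= - th1 -> al - p * th1 - s2 <= - th2 ->
  q0 p q al s1 s2 <= th1 /\ p0 p q al s1 s2 <= th2.
Proof.
move=> p_gt0 q_gt0 pq1 u_exp v_exp; have pq1_gt0 : 0 < p * q - 1 by lra.
have := ler_wpM2l (ltW q_gt0) v_exp; have := ler_wpM2l (ltW p_gt0) u_exp.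
by rewrite /q0 /p0 !ler_pdivrMr //; split; nra.
Qed.

Section solutions.
Context {R : realType} {n : nat}.
Variables (p q alpha s1 s2 : R).
Hypotheses (n_gt0 : (0 < n)%N) (p_gt0 : 0 < p) (q_gt0 : 0 < q)
  (alpha_le_n : alpha <= n%:R) (s1_ge0 : 0 <= s1) (s2_ge0 : 0 <= s2).
Variables (u v : 'rV[R]_n -> R).
Hypothesis uv_sol : pos_solution p q alpha s1 s2 u v.

Let u_pot x : (u x)%:E = potential alpha s1 q v x. Proof. by case: uv_sol => _ [_ [_ [_ []]]]. Qed.
Let v_pot x : (v x)%:E = potential alpha s2 p u x. Proof. by case: uv_sol => _ [_ [_ [_ []]]]. Qed.

Lemma decaying_solution_ub : 1 < p * q -> decaying u v ->
  exists2 C, 0 < C & near_infinity (fun x =>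
    u x <= C * powR (enorm x) (- q0 p q alpha s1 s2) /\
    v x <= C * powR (enorm x) (- p0 p q alpha s1 s2)).
Proof.
move=> pq1 [th1 [th2 [th1_gt0 [th2_gt0 [u_asy v_asy]]]]].
have [c1 [C1 [r1 [c1_gt0 [C1_gt0 u_bd]]]]] := u_asy.
have [c2 [C2 [r2 [c2_gt0 [C2_gt0 v_bd]]]]] := v_asy.
have u_ub : near_infinity (fun x => u x <= C1 * powR (enorm x) (- th1)).
  by exists r1 => x /u_bd [].
have v_ub : near_infinity (fun x => v x <= C2 * powR (enorm x) (- th2)).
  by exists r2 => x /v_bd [].
have u_lb : near_infinity (fun x => c1 * powR (enorm x) (- th1) <= u x).
  by exists r1 => x /u_bd [].
have v_lb : near_infinity (fun x => c2 * powR (enorm x) (- th2) <= v x).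
  by exists r2 => x /v_bd [].
have [Ku Ku_gt0 [ru u_pot_lb]] := potential_ge_near n_gt0 alpha_le_n s1_ge0 (ltW q_gt0)
  (ltW th2_gt0) c2_gt0 v_lb.
have [Kv Kv_gt0 [rv v_pot_lb]] := potential_ge_near n_gt0 alpha_le_n s2_ge0 (ltW p_gt0)
  (ltW th1_gt0) c1_gt0 u_lb.
have u_exp : alpha - q * th2 - s1 <= - th1.
  apply: near_infinity_exponent_le n_gt0 Ku_gt0 C1_gt0 _ u_ub.
  by exists ru => x /u_pot_lb; rewrite -u_pot lee_fin.
have v_exp : alpha - p * th1 - s2 <= - th2.
  apply: near_infinity_exponent_le n_gt0 Kv_gt0 C2_gt0 _ v_ub.
  by exists rv => x /v_pot_lb; rewrite -v_pot lee_fin.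
have [q0_le p0_le] := decay_exponents_ge p_gt0 q_gt0 pq1 u_exp v_exp.
exists (Num.max C1 C2); first by rewrite lt_max C1_gt0.
have [r0 bds] := near_infinity_and u_ub (near_infinity_and v_ub (ex_intro _ 1 (fun x => id))).
have C1_le : C1 <= Num.max C1 C2 by rewrite le_max lexx.
have C2_le : C2 <= Num.max C1 C2 by rewrite le_max lexx orbT.
exists r0 => x /bds [ub [vb /ltW x1]]; split.
  apply: le_trans ub (ler_pM (ltW C1_gt0) (powR_ge0 _ _) C1_le _).
  by apply: ler_powR; rewrite // lerN2.
apply: le_trans vb (ler_pM (ltW C2_gt0) (powR_ge0 _ _) C2_le _).
by apply: ler_powR; rewrite // lerN2.
Qed.

Lemma solution_lb : exists2 c, 0 < c & near_infinity (fun x =>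
  c / powR (enorm x) (n%:R - alpha) <= u x /\
  c / powR (enorm x) (Num.min (n%:R - alpha) (p * (n%:R - alpha) - (alpha - s2)))
    <= v x).
Proof.
have [u_gt0 [v_gt0 [u_borel [v_borel _]]]] := uv_sol.
have [cu cu_gt0 [ru u_far]] :=
  potential_ge_far n_gt0 alpha_le_n s1_ge0 (ltW q_gt0) v_gt0 v_borel.
have [cv cv_gt0 [rv v_far]] :=
  potential_ge_far n_gt0 alpha_le_n s2_ge0 (ltW p_gt0) u_gt0 u_borel.
have u_lb : near_infinity (fun x => cu * powR (enorm x) (- (n%:R - alpha)) <= u x).
  by exists ru => x /u_far; rewrite -u_pot lee_fin.
have n_alpha_ge0 : 0 <= n%:R - alpha by rewrite subr_ge0.
have [K K_gt0 [rK v_near]] := potential_ge_near n_gt0 alpha_le_n s2_ge0 (ltW p_gt0)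
  n_alpha_ge0 cu_gt0 u_lb.
pose c := Num.min cu (Num.min cv K).
exists c; first by rewrite !lt_min cu_gt0 cv_gt0.
have [r0 bds] := near_infinity_and u_lb (ex_intro _ (Num.max rv rK) (fun x => id)).
exists r0 => x /bds [ub]; rewrite gt_max => /andP[/v_far vb_far /v_near vb_near].
rewrite -v_pot lee_fin in vb_far; rewrite -v_pot lee_fin in vb_near.
rewrite -!powRN; split.
  by apply: le_trans ub; rewrite ler_wpM2r ?powR_ge0 // ge_min lexx.
have [m_le|m_gt] := leP (n%:R - alpha) (p * (n%:R - alpha) - (alpha - s2)).
  apply: le_trans vb_far.
  by rewrite ler_wpM2r ?powR_ge0 // !ge_min lexx orbT.
have -> : - (p * (n%:R - alpha) - (alpha - s2)) = alpha - p * (n%:R - alpha) - s2.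
  by ring.
apply: le_trans vb_near.
by rewrite ler_wpM2r ?powR_ge0 // !ge_min lexx !orbT.
Qed.

End solutions.

Theorem theorem1p1 (R : realType) (n : nat) (p q alpha s1 s2 : R) :
  (3 <= n)%N -> 0 < p -> 0 < q -> 1 < p * q ->
  0 < alpha -> alpha < n%:R ->
  0 <= s1 -> s1 < alpha -> 0 <= s2 -> s2 < alpha ->
  (forall u v : 'rV[R]_n -> R,
     pos_solution p q alpha s1 s2 u v ->
     bounded_fun u -> bounded_fun v -> decaying u v ->
     exists C r0 : R, 0 < C /\
       forall x, r0 < enorm x ->
         u x <= C * powR (enorm x) (- q0 p q alpha s1 s2) /\
         v x <= C * powR (enorm x) (- p0 p q alpha s1 s2)) /\
  (p <= q -> s2 <= s1 ->
   forall u v : 'rV[R]_n -> R,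
     pos_solution p q alpha s1 s2 u v ->
     exists c r0 : R, 0 < c /\
       forall x, r0 < enorm x ->
         c / powR (enorm x) (n%:R - alpha) <= u x /\
         c / powR (enorm x)
               (Num.min (n%:R - alpha) (p * (n%:R - alpha) - (alpha - s2)))
           <= v x).
Proof.
move=> n_ge3 p_gt0 q_gt0 pq_gt1 _ alpha_lt_n s1_ge0 _ s2_ge0 _.
have n_gt0 : (0 < n)%N by apply: leq_trans n_ge3.
have alpha_le_n := ltW alpha_lt_n.
split=> [u v uv_sol _ _ uv_decay | _ _ u v uv_sol].
  have [C C_gt0 [r0 uv_ub]] := decaying_solution_ub n_gt0 p_gt0 q_gt0 alpha_le_n
    s1_ge0 s2_ge0 uv_sol pq_gt1 uv_decay.
  by exists C, r0.
have [c c_gt0 [r0 uv_lb]] :=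
  solution_lb n_gt0 p_gt0 q_gt0 alpha_le_n s1_ge0 s2_ge0 uv_sol.
by exists c, r0.
Qed.
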